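(* Let $X$ be an object of a double complex in a well-powered abelian category. (a) If any one of the $L$-homologies ${}^{h}X_\wedge,\ {}^{h}X_d,\ {}^{\vee}X_d,\ {}^{\vee}X_h,\ {}^{d}X_h,\ {}^{d}X_\wedge,\ X_d$ is trivial, then $X_h$ is trivial. (b) If any one of the $L$-homologies ${}^{v}X_\wedge,\ {}^{v}X_d,\ {}^{\vee}X_d,\ {}^{\vee}X_v,\ {}^{d}X_v,\ {}^{d}X_\wedge,\ X_d$ is trivial, then $X_v$ is trivial. (c) If $X_d$ is trivial, then every $L$-homology of $X$ is trivial.
   Context: A double complex in a well-powered abelian category consists of objects $X_{i,j}$ ($i,j\in\mathbb Z$), horizontal morphisms $X_{i,j}\to X_{i+1,j}$ and vertical morphisms $X_{i,j}\to X_{i,j+1}$ such that consecutive horizontal morphisms compose to $0$, consecutive vertical morphisms compose to $0$, and every square commutes. For $X=X_{i,j}$ write $h^{\rm in}_X, h^{\rm out}_X$ for the horizontal morphisms into and out of $X$, $v^{\rm in}_X,v^{\rm out}_X$ for the vertical ones, and $\delta^{\rm in}_X\colon X_{i-1,j-1}\to X$, $\delta^{\rm out}_X\colon X\to X_{i+1,j+1}$ for the diagonal composites. Set $\mathsf K^h=\operatorname{Ker}h^{\rm out}_X$, $\mathsf K^v=\operatorname{Ker}v^{\rm out}_X$, $\mathsf K^d=\operatorname{Ker}\delta^{\rm out}_X$, $\mathsf I^h=\operatorname{Im}h^{\rm in}_X$, $\mathsf I^v=\operatorname{Im}v^{\rm in}_X$, $\mathsf I^d=\operatorname{Im}\delta^{\rm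 in}_X$. An $L$-homology of $X$ is a pair $(U,V)$ with $U$ in the sublattice generated by $\mathsf K^h,\mathsf K^v,\mathsf K^d$, $V$ in the sublattice generated by $\mathsf I^h,\mathsf I^v,\mathsf I^d$, and $V\le U$; it is written $U/V$ and called trivial if the quotient $U/V$ is a zero object (i.e. $U=V$). Named $L$-homologies: $X_h=\mathsf K^h/\mathsf I^h$, $X_v=\mathsf K^v/\mathsf I^v$, $X_d=\mathsf K^d/\mathsf I^d$, ${}^{\vee}X_h=(\mathsf K^h\vee\mathsf K^v)/\mathsf I^h$, ${}^{d}X_h=\mathsf K^d/\mathsf I^h$, ${}^{\vee}X_v=(\mathsf K^h\vee\mathsf K^v)/\mathsf I^v$, ${}^{d}X_v=\mathsf K^d/\mathsf I^v$, ${}^{h}X_d=\mathsf K^h/\mathsf I^d$, ${}^{v}X_d=\mathsf K^v/\mathsf I^d$, ${}^{\vee}X_d=(\mathsf K^h\vee\mathsf K^v)/\mathsf I^d$, ${}^{h}X_\wedge=\mathsf K^h/(\mathsf I^h\wedge\mathsf I^v)$, ${}^{v}X_\wedge=\mathsf K^v/(\mathsf I^h\wedge\mathsf I^v)$, ${}^{d}X_\wedge=\mathsf K^d/(\mathsf I^h\wedge\mathsf I^v)$. *)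

From Stdlib Require Import ZArith.
Open Scope Z_scope.

Record ZCat := {
  Obj : Type;
  Hom : Obj -> Obj -> Type;
  comp : forall {A B C : Obj}, Hom B C -> Hom A B -> Hom A C;
  idm : forall A : Obj, Hom A A;
  comp_assoc : forall (A B C D : Obj) (f : Hom C D) (g : Hom B C) (h : Hom A B),
      comp f (comp g h) = comp (comp f g) h;
  comp_id_l : forall (A B : Obj) (f : Hom A B), comp (idm B) f = f;
  comp_id_r : forall (A B : Obj) (f : Hom A B), comp f (idm A) = f;
  zobj : Obj;
  to_z : forall A : Obj, Hom A zobj;
  to_z_uniq : forall (A : Obj) (f : Hom A zobj), f = to_z A;
  from_z : forall A : Obj, Hom zobj A;
  from_z_uniq : forall (A : Obj) (f : Hom zobj A), f = from_z A
}.

Arguments comp {_ _ _ _} _ _.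
Arguments idm {_} _.

Section Basics.
Variable C : ZCat.

Definition zero (A B : Obj C) : Hom C A B := comp (from_z C B) (to_z C A).

Definition mono {A B : Obj C} (m : Hom C A B) : Prop :=
  forall (W : Obj C) (g h : Hom C W A), comp m g = comp m h -> g = h.

Definition epi {A B : Obj C} (e : Hom C A B) : Prop :=
  forall (W : Obj C) (g h : Hom C B W), comp g e = comp h e -> g = h.

Definition is_kernel {A B K : Obj C} (f : Hom C A B) (k : Hom C K A) : Prop :=
  comp f k = zero K B /\
  forall (W : Obj C) (g : Hom C W A), comp f g = zero W B ->
    exists u : Hom C W K, comp k u = g /\
      forall u' : Hom C W K, comp k u' = g -> u' = u.

Definition is_cokernel {A B Q : Obj C} (f : Hom C A B) (c : Hom C B Q) : Prop :=
  comp c f = zero A Q /\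
  forall (W : Obj C) (g : Hom C B W), comp g f = zero A W ->
    exists u : Hom C Q W, comp u c = g /\
      forall u' : Hom C Q W, comp u' c = g -> u' = u.

Definition is_product {A B P : Obj C} (p1 : Hom C P A) (p2 : Hom C P B) : Prop :=
  forall (W : Obj C) (q1 : Hom C W A) (q2 : Hom C W B),
    exists u : Hom C W P, (comp p1 u = q1 /\ comp p2 u = q2) /\
      forall u' : Hom C W P, comp p1 u' = q1 -> comp p2 u' = q2 -> u' = u.

Definition is_coproduct {A B S : Obj C} (i1 : Hom C A S) (i2 : Hom C B S) : Prop :=
  forall (W : Obj C) (q1 : Hom C A W) (q2 : Hom C B W),
    exists u : Hom C S W, (comp u i1 = q1 /\ comp u i2 = q2) /\
      forall u' : Hom C S W, comp u' i1 = q1 -> comp u' i2 = q2 -> u' = u.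

Definition abelian : Prop :=
  (forall (A B : Obj C) (f : Hom C A B),
      exists (K : Obj C) (k : Hom C K A), is_kernel f k) /\
  (forall (A B : Obj C) (f : Hom C A B),
      exists (Q : Obj C) (c : Hom C B Q), is_cokernel f c) /\
  (forall A B : Obj C, exists (P : Obj C) (p1 : Hom C P A) (p2 : Hom C P B),
      is_product p1 p2) /\
  (forall A B : Obj C, exists (S : Obj C) (i1 : Hom C A S) (i2 : Hom C B S),
      is_coproduct i1 i2) /\
  (forall (A B : Obj C) (m : Hom C A B), mono m ->
      exists (D : Obj C) (f : Hom C B D), is_kernel f m) /\
  (forall (A B : Obj C) (e : Hom C A B), epi e ->
      exists (D : Obj C) (f : Hom C D A), is_cokernel f e).

(** Subobjects of X (represented by monomorphisms into X). *)
Record sub (X : Obj C) := {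
  sobj : Obj C;
  sarr : Hom C sobj X;
  smono : mono sarr
}.
Arguments sobj {X} _.
Arguments sarr {X} _.

Definition sub_le {X : Obj C} (U V : sub X) : Prop :=
  exists f : Hom C (sobj U) (sobj V), comp (sarr V) f = sarr U.

Definition sub_eq {X : Obj C} (U V : sub X) : Prop := sub_le U V /\ sub_le V U.

Definition is_meet {X : Obj C} (U V M : sub X) : Prop :=
  sub_le M U /\ sub_le M V /\
  forall W : sub X, sub_le W U -> sub_le W V -> sub_le W M.

Definition is_join {X : Obj C} (U V J : sub X) : Prop :=
  sub_le U J /\ sub_le V J /\
  forall W : sub X, sub_le U W -> sub_le V W -> sub_le J W.

Definition is_ker_sub {X B : Obj C} (f : Hom C X B) (U : sub X) : Prop :=
  is_kernel f (sarr U).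

Definition factors_through {A X : Obj C} (f : Hom C A X) (U : sub X) : Prop :=
  exists g : Hom C A (sobj U), comp (sarr U) g = f.

Definition is_im_sub {A X : Obj C} (f : Hom C A X) (U : sub X) : Prop :=
  factors_through f U /\ forall W : sub X, factors_through f W -> sub_le U W.

Inductive in_gen {X : Obj C} (G : sub X -> Prop) : sub X -> Prop :=
  | gen_base : forall U V, G V -> sub_eq U V -> in_gen G U
  | gen_meet : forall U V M, in_gen G U -> in_gen G V -> is_meet U V M -> in_gen G M
  | gen_join : forall U V J, in_gen G U -> in_gen G V -> is_join U V J -> in_gen G J.

Definition gen3 {X : Obj C} (A1 A2 A3 : sub X) : sub X -> Prop :=
  fun U => U = A1 \/ U = A2 \/ U = A3.

(** An L-homology U/V is trivial iff U = V as subobjects. *)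
Definition trivial_hom {X : Obj C} (U V : sub X) : Prop := sub_eq U V.

Record dcomplex := {
  dX : Z -> Z -> Obj C;
  dh : forall i j : Z, Hom C (dX i j) (dX (i + 1) j);
  dv : forall i j : Z, Hom C (dX i j) (dX i (j + 1));
  dh_dh : forall i j : Z, comp (dh (i + 1) j) (dh i j) = zero _ _;
  dv_dv : forall i j : Z, comp (dv i (j + 1)) (dv i j) = zero _ _;
  d_sq : forall i j : Z, comp (dv (i + 1) j) (dh i j) = comp (dh i (j + 1)) (dv i j)
}.

(** Local data at the object X = X_{i+1, j+1} (every position of Z x Z is of
    this form); this indexing avoids the non-convertibility of (i-1)+1 and i. *)
Definition obj_at (D : dcomplex) (i j : Z) : Obj C := dX D (i + 1) (j + 1).

Definition h_in (D : dcomplex) (i j : Z) : Hom C (dX D i (j + 1)) (obj_at D i j) :=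
  dh D i (j + 1).
Definition v_in (D : dcomplex) (i j : Z) : Hom C (dX D (i + 1) j) (obj_at D i j) :=
  dv D (i + 1) j.
Definition d_in (D : dcomplex) (i j : Z) : Hom C (dX D i j) (obj_at D i j) :=
  comp (dv D (i + 1) j) (dh D i j).
Definition h_out (D : dcomplex) (i j : Z) :
  Hom C (obj_at D i j) (dX D (i + 1 + 1) (j + 1)) := dh D (i + 1) (j + 1).
Definition v_out (D : dcomplex) (i j : Z) :
  Hom C (obj_at D i j) (dX D (i + 1) (j + 1 + 1)) := dv D (i + 1) (j + 1).
Definition d_out (D : dcomplex) (i j : Z) :
  Hom C (obj_at D i j) (dX D (i + 1 + 1) (j + 1 + 1)) :=
  comp (dv D (i + 1 + 1) (j + 1)) (dh D (i + 1) (j + 1)).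

End Basics.

Arguments sobj {C X} _.
Arguments sarr {C X} _.
Arguments sub_le {C X} _ _.
Arguments sub_eq {C X} _ _.
Arguments is_meet {C X} _ _ _.
Arguments is_join {C X} _ _ _.
Arguments is_ker_sub {C X B} _ _.
Arguments is_im_sub {C A X} _ _.
Arguments in_gen {C X} _ _.
Arguments gen3 {C X} _ _ _ _.
Arguments trivial_hom {C X} _ _.
Arguments dX {C} _ _ _.
Arguments dh {C} _ _ _.
Arguments dv {C} _ _ _.
Arguments obj_at {C} _ _ _.
Arguments h_in {C} _ _ _.
Arguments v_in {C} _ _ _.
Arguments d_in {C} _ _ _.
Arguments h_out {C} _ _ _.
Arguments v_out {C} _ _ _.
Arguments d_out {C} _ _ _.

(* All conditions in the statement live in the lattice of subobjects of X,
   and six inclusions suffice: Ih <= Kh and Iv <= Kv because rows and columns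
   are complexes, and Id <= Ih, Id <= Iv, Kh <= Kd, Kv <= Kd because, by the
   commuting squares, the diagonal maps factor through the horizontal and the
   vertical ones in both orders.  So both generated sublattices lie in the
   interval [Id, Kd], and each L-homology named in (a) spans an interval
   containing [Ih, Kh]; a trivial L-homology collapses the interval it spans. *)
From Stdlib Require Import ZArith.
Open Scope Z_scope.

Section Subobjects.
Variable C : ZCat.

Lemma comp_zero_r (A B B' : Obj C) (f : Hom C B B') :
  comp f (zero C A B) = zero C A B'.
Proof.
  unfold zero. rewrite comp_assoc.
  now rewrite (from_z_uniq C _ (comp f (from_z C B))).
Qed.

Lemma sub_le_refl {X : Obj C} (U : sub C X) : sub_le U U.
Proof. exists (idm (sobj U)). apply comp_id_r. Qed.

Lemma sub_le_trans {X : Obj C} (U V W : sub C X) :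
  sub_le U V -> sub_le V W -> sub_le U W.
Proof.
  intros [f Hf] [g Hg]. exists (comp g f).
  now rewrite comp_assoc, Hg.
Qed.

Lemma ker_sub_max {X B : Obj C} (f : Hom C X B) (K U : sub C X) :
  is_ker_sub f K -> comp f (sarr U) = zero C _ _ -> sub_le U K.
Proof.
  intros [_ HK] HU. destruct (HK _ _ HU) as [u [Hu _]]. now exists u.
Qed.

Lemma im_sub_min {A X : Obj C} (f : Hom C A X) (I U : sub C X) :
  is_im_sub f I -> factors_through C f U -> sub_le I U.
Proof. intros [_ HI]. apply HI. Qed.

Lemma im_le_ker {A X B : Obj C} (f : Hom C A X) (g : Hom C X B) (I K : sub C X) :
  comp g f = zero C A B -> is_im_sub f I -> is_ker_sub g K -> sub_le I K.
Proof.
  intros Hgf HI [_ HK]. apply (im_sub_min f); auto.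
  destruct (HK _ f Hgf) as [u [Hu _]]. now exists u.
Qed.

Lemma im_comp_le {A B X : Obj C} (f : Hom C A B) (g : Hom C B X) (I I' : sub C X) :
  is_im_sub g I -> is_im_sub (comp g f) I' -> sub_le I' I.
Proof.
  intros [[u Hu] _] HI'. apply (im_sub_min (comp g f)); auto.
  exists (comp u f). now rewrite comp_assoc, Hu.
Qed.

Lemma ker_le_ker_comp {X B B' : Obj C} (f : Hom C X B) (g : Hom C B B')
    (K K' : sub C X) :
  is_ker_sub f K -> is_ker_sub (comp g f) K' -> sub_le K K'.
Proof.
  intros [Hf _] HK'. apply (ker_sub_max (comp g f)); auto.
  now rewrite <- comp_assoc, Hf, comp_zero_r.
Qed.

Lemma in_gen_interval {X : Obj C} (G : sub C X -> Prop) (L T : sub C X) :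
  (forall V, G V -> sub_le L V /\ sub_le V T) ->
  forall U, in_gen G U -> sub_le L U /\ sub_le U T.
Proof.
  intros HG U HU.
  induction HU as [U V HV [HUV HVU] | U V M _ [LU UT] _ [LV VT] [MU [MV Mmax]]
                  | U V J _ [LU UT] _ [LV VT] [UJ [VJ Jmin]]].
  - destruct (HG V HV) as [LV VT].
    split; eapply sub_le_trans; eauto.
  - split; [ apply Mmax; assumption | eapply sub_le_trans; eauto ].
  - split; [ eapply sub_le_trans; eauto | apply Jmin; assumption ].
Qed.

Lemma trivial_hom_squeeze {X : Obj C} (A B U V : sub C X) :
  sub_le A U -> sub_le V B -> trivial_hom U V -> sub_le A B.
Proof.
  intros AU VB [UV _].
  eapply sub_le_trans; [exact AU |]. eapply sub_le_trans; eauto.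
Qed.

End Subobjects.

Section DoubleComplexInclusions.
Variables (C : ZCat) (D : dcomplex C) (i j : Z).
Variables Kh Kv Kd Ih Iv Id : sub C (obj_at D i j).
Hypothesis HKh : is_ker_sub (h_out D i j) Kh.
Hypothesis HKv : is_ker_sub (v_out D i j) Kv.
Hypothesis HKd : is_ker_sub (d_out D i j) Kd.
Hypothesis HIh : is_im_sub (h_in D i j) Ih.
Hypothesis HIv : is_im_sub (v_in D i j) Iv.
Hypothesis HId : is_im_sub (d_in D i j) Id.

Lemma im_h_le_ker_h : sub_le Ih Kh.
Proof. exact (im_le_ker C _ _ _ _ (dh_dh C D i (j + 1)) HIh HKh). Qed.

Lemma im_v_le_ker_v : sub_le Iv Kv.
Proof. exact (im_le_ker C _ _ _ _ (dv_dv C D (i + 1) j) HIv HKv). Qed.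

Lemma im_d_le_im_h : sub_le Id Ih.
Proof.
  unfold d_in in HId. rewrite d_sq in HId.
  exact (im_comp_le C _ _ _ _ HIh HId).
Qed.

Lemma im_d_le_im_v : sub_le Id Iv.
Proof. exact (im_comp_le C _ _ _ _ HIv HId). Qed.

Lemma ker_h_le_ker_d : sub_le Kh Kd.
Proof. exact (ker_le_ker_comp C _ _ _ _ HKh HKd). Qed.

Lemma ker_v_le_ker_d : sub_le Kv Kd.
Proof.
  unfold d_out in HKd. rewrite d_sq in HKd.
  exact (ker_le_ker_comp C _ _ _ _ HKv HKd).
Qed.

End DoubleComplexInclusions.

Section LHomologyConfiguration.
Variables (C : ZCat) (X : Obj C).
Variables Kh Kv Kd Ih Iv Id KhvJ IhvM : sub C X.
Hypothesis IhKh : sub_le Ih Kh.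
Hypothesis IvKv : sub_le Iv Kv.
Hypothesis IdIh : sub_le Id Ih.
Hypothesis IdIv : sub_le Id Iv.
Hypothesis KhKd : sub_le Kh Kd.
Hypothesis KvKd : sub_le Kv Kd.
Hypothesis HJ : is_join Kh Kv KhvJ.
Hypothesis HM : is_meet Ih Iv IhvM.

Lemma horizontal_homology_trivial :
  (trivial_hom Kh IhvM \/ trivial_hom Kh Id \/ trivial_hom KhvJ Id \/
   trivial_hom KhvJ Ih \/ trivial_hom Kd Ih \/ trivial_hom Kd IhvM \/
   trivial_hom Kd Id) -> trivial_hom Kh Ih.
Proof.
  destruct HJ as [KhJ _]. destruct HM as [MIh _].
  pose proof (sub_le_refl C Kh) as KhKh. pose proof (sub_le_refl C Ih) as IhIh.
  intros Htriv. split; [| exact IhKh].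
  destruct Htriv as [H|[H|[H|[H|[H|[H|H]]]]]];
    apply (trivial_hom_squeeze C Kh Ih _ _) in H; auto.
Qed.

Lemma vertical_homology_trivial :
  (trivial_hom Kv IhvM \/ trivial_hom Kv Id \/ trivial_hom KhvJ Id \/
   trivial_hom KhvJ Iv \/ trivial_hom Kd Iv \/ trivial_hom Kd IhvM \/
   trivial_hom Kd Id) -> trivial_hom Kv Iv.
Proof.
  destruct HJ as [_ [KvJ _]]. destruct HM as [_ [MIv _]].
  pose proof (sub_le_refl C Kv) as KvKv. pose proof (sub_le_refl C Iv) as IvIv.
  intros Htriv. split; [| exact IvKv].
  destruct Htriv as [H|[H|[H|[H|[H|[H|H]]]]]];
    apply (trivial_hom_squeeze C Kv Iv _ _) in H; auto.
Qed.

Lemma gen_ker_in_interval (U : sub C X) :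
  in_gen (gen3 Kh Kv Kd) U -> sub_le Id U /\ sub_le U Kd.
Proof.
  apply in_gen_interval. intros W [-> | [-> | ->]]; split; auto.
  - exact (sub_le_trans C _ _ _ IdIh IhKh).
  - exact (sub_le_trans C _ _ _ IdIv IvKv).
  - exact (sub_le_trans C _ _ _ IdIh (sub_le_trans C _ _ _ IhKh KhKd)).
  - apply sub_le_refl.
Qed.

Lemma gen_im_in_interval (V : sub C X) :
  in_gen (gen3 Ih Iv Id) V -> sub_le Id V /\ sub_le V Kd.
Proof.
  apply in_gen_interval. intros W [-> | [-> | ->]]; split; auto.
  - exact (sub_le_trans C _ _ _ IhKh KhKd).
  - exact (sub_le_trans C _ _ _ IvKv KvKd).
  - apply sub_le_refl.
  - exact (sub_le_trans C _ _ _ IdIh (sub_le_trans C _ _ _ IhKh KhKd)).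
Qed.

Lemma all_homologies_trivial :
  trivial_hom Kd Id ->
  forall U V : sub C X,
    in_gen (gen3 Kh Kv Kd) U -> in_gen (gen3 Ih Iv Id) V -> sub_le V U ->
    trivial_hom U V.
Proof.
  intros [KdId _] U V HU HV VU. split; [| exact VU].
  destruct (gen_ker_in_interval U HU) as [_ UKd].
  destruct (gen_im_in_interval V HV) as [IdV _].
  eapply sub_le_trans; [exact UKd |]. eapply sub_le_trans; eauto.
Qed.

End LHomologyConfiguration.

Theorem corollary4p3 (C : ZCat) (HC : abelian C) (D : dcomplex C) (i j : Z)
  (Kh Kv Kd Ih Iv Id KhvJ IhvM : sub C (obj_at D i j)) :
  is_ker_sub (h_out D i j) Kh ->
  is_ker_sub (v_out D i j) Kv ->
  is_ker_sub (d_out D i j) Kd ->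
  is_im_sub (h_in D i j) Ih ->
  is_im_sub (v_in D i j) Iv ->
  is_im_sub (d_in D i j) Id ->
  is_join Kh Kv KhvJ ->
  is_meet Ih Iv IhvM ->
  (* (a) *)
  ((trivial_hom Kh IhvM \/ trivial_hom Kh Id \/ trivial_hom KhvJ Id \/
    trivial_hom KhvJ Ih \/ trivial_hom Kd Ih \/ trivial_hom Kd IhvM \/
    trivial_hom Kd Id) -> trivial_hom Kh Ih) /\
  (* (b) *)
  ((trivial_hom Kv IhvM \/ trivial_hom Kv Id \/ trivial_hom KhvJ Id \/
    trivial_hom KhvJ Iv \/ trivial_hom Kd Iv \/ trivial_hom Kd IhvM \/
    trivial_hom Kd Id) -> trivial_hom Kv Iv) /\
  (* (c) *)
  (trivial_hom Kd Id ->
   forall U V : sub C (obj_at D i j),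
     in_gen (gen3 Kh Kv Kd) U -> in_gen (gen3 Ih Iv Id) V -> sub_le V U ->
     trivial_hom U V).
Proof.
  intros HKh HKv HKd HIh HIv HId HJ HM.
  pose proof (im_h_le_ker_h C D i j Kh Ih HKh HIh) as IhKh.
  pose proof (im_v_le_ker_v C D i j Kv Iv HKv HIv) as IvKv.
  pose proof (im_d_le_im_h C D i j Ih Id HIh HId) as IdIh.
  pose proof (im_d_le_im_v C D i j Iv Id HIv HId) as IdIv.
  pose proof (ker_h_le_ker_d C D i j Kh Kd HKh HKd) as KhKd.
  pose proof (ker_v_le_ker_d C D i j Kv Kd HKv HKd) as KvKd.
  split; [| split].
  - eapply horizontal_homology_trivial; eassumption.
  - eapply vertical_homology_trivial; eassumption.
  - eapply all_homologies_trivial; eassumption.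
Qed.
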